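(* Let $\beta$ be an element of $\mathbb{K}$ (e.g. an indeterminate adjoined to $\mathbb{K}$). Let $G_{\mathrm{cyc}}$ be the $q$-grammar with master variables $S=\{x,y,z,e\}$, rule \[ x_j\mapsto q^jy_jx_{j+1},\quad y_j\mapsto q^jy_jx_{j+1},\quad z_j\mapsto q^jy_jx_{j+1},\quad e_j\mapsto \beta q^je_jz_{j+1}\qquad(j\ge0), \] and order KSO (identity), and let $D$ be its $q$-derivative. Let $\phi$ be the evaluation with $\phi(x_j)=x$, $\phi(y_j)=y$, $\phi(z_j)=z$, $\phi(e_j)=e$ for all $j$ (commuting indeterminates). Then for all $n\ge1$, \[ \phi\big(D^n(e_0)\big)=e\,F^{\mathrm{inv}}_n(q;x,y,z\mid\beta),\qquad F^{\mathrm{inv}}_n(q;x,y,z\mid\beta)=\sum_{\sigma\in\mathfrak{S}_n}q^{\operatorname{inv}(\sigma)}x^{\operatorname{iasc}(\sigma)}z^{\operatorname{isol}(\sigma)}y^{\operatorname{des}(\sigma)-1}\beta^{\operatorname{RLmin}(\sigma)}. \]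
   Context: $\mathbb{K}$ is a commutative ring with unity and characteristic zero, $q$ an indeterminate. For a set $S$ of master variables, $\mathbb{S}=\{s_i:s\in S,\ i\ge0\}$ is a set of non-commuting variables, $F(\mathbb{S})$ the free group on $\mathbb{S}$, $\mathbb{E}=\mathbb{K}[q][F(\mathbb{S})]$ its group algebra. A rule $R$ assigns to each $s_i$ an element of $\mathbb{E}$, extended by $R(s_i^{-1})=-s_i^{-1}R(s_i)s_{i+1}^{-1}$. The up-arrow $\uparrow$ is the linear map replacing each letter $s_i^{\pm1}$ by $s_{i+1}^{\pm1}$. The $q$-derivative of a $q$-grammar $(S,R,\rho)$ (with $\rho$ an order, i.e. a letter-permuting rewriting of words; KSO is the identity) is the $\mathbb{K}[q]$-linear map with $D(w_1\cdots w_n)=\sum_{j=1}^n\rho\big(w_1\cdots w_{j-1}R(w_j)\uparrow(w_{j+1}\cdots w_n)\big)$ for letters $w_j$, $D^0=\mathrm{id}$, $D^k=D\circ D^{k-1}$. An evaluation extends to a $\mathbb{K}[q]$-linear ring morphism. For $\sigma\in\mathfrak{S}_n$ with convention $\sigma_0=\sigma_{n+1}=0$: $0\le i\le n$ is a descent if $\sigma_i>\sigma_{i+1}$, an ascent otherwise, $\operatorname{des}$ counts descents; $\operatorname{inv}(\sigma)=\#\{(i,j):i<j,\ \sigma_i>\sigma_j\}$; a right-to-left minimum is an entry $\sigma_i$ with $\sigma_i<\sigma_j$ for all $j>i$, $\operatorname{RLmin}$ counts them; placing a bar at the start and after each right-to-left minimum, an entry alone between two consecutive bars is isolated, $\operatorname{isol}$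 counts isolated entries; an index $0\le i\le n-1$ is a non-isolated ascent if it is an ascent and $\sigma_{i+1}$ is not isolated, $\operatorname{iasc}$ counts them. *)

From HB Require Import structures.
From mathcomp Require Import all_boot all_order all_algebra all_fingroup.
From mathcomp Require Import mpoly.
Set Implicit Arguments. Unset Strict Implicit. Unset Printing Implicit Defensive.
Import GRing.Theory.
Local Open Scope ring_scope.

Inductive master := MX | MY | MZ | ME.

Definition letter := (master * nat)%type.
Definition word := seq letter.

Section Grammar.
Variable K : comNzRingType.

(* An element of E = K[q][F(S)] represented as a formal sum
   sum_k c_k w_k (a list of (coefficient, word) pairs). *)
Definition elem := seq ({poly K} * word).

Definition up (w : word) : word := [seq (l.1, l.2.+1) | l <- w].

Definition rule_cyc (beta : K) (l : letter) : elem :=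
  let j := l.2 in
  match l.1 with
  | ME => [:: (beta%:P * 'X^j, [:: (ME, j); (MZ, j.+1)])]
  | _  => [:: ('X^j, [:: (MY, j); (MX, j.+1)])]
  end.

(* q-derivative on a word (order KSO = identity):
   D(w_1...w_n) = sum_j w_1..w_{j-1} R(w_j) up(w_{j+1}..w_n) *)
Definition Dword (beta : K) (w : word) : elem :=
  flatten [seq [seq (c.1, take j w ++ c.2 ++ up (drop j.+1 w))
               | c <- rule_cyc beta (nth (MX, 0%N) w j)]
          | j <- iota 0 (size w)].

Definition Dcyc (beta : K) (E : elem) : elem :=
  flatten [seq [seq (a.1 * c.1, c.2) | c <- Dword beta a.2] | a <- E].

Definition Dcyc_iter (beta : K) (n : nat) (E : elem) : elem :=
  iter n (Dcyc beta) E.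

(* indeterminates of K[q][x,y,z,e] = {mpoly {poly K}[4]}:
   x = 'X_0, y = 'X_1, z = 'X_2, e = 'X_3 *)
Definition midx (s : master) : 'I_4 :=
  match s with MX => inord 0 | MY => inord 1 | MZ => inord 2 | ME => inord 3 end.

Definition phi (E : elem) : {mpoly {poly K}[4]} :=
  \sum_(a <- E) a.1 *: \prod_(l <- a.2) 'X_(midx l.1).

Definition e0 : elem := [:: (1, [:: (ME, 0%N)])].
End Grammar.

Section Stats.
Variable n : nat.
Implicit Type s : 'S_n.

(* sigma_i for 1 <= i <= n (values in 1..n), with sigma_0 = sigma_{n+1} = 0 *)
Definition sv s (i : nat) : nat := nth 0%N (0%N :: [seq (s k).+1 | k <- enum 'I_n]) i.

Definition is_descent s (i : nat) : bool := (sv s i.+1 < sv s i)%N.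
Definition is_ascent s (i : nat) : bool := ~~ is_descent s i.

Definition des s : nat := count (is_descent s) (iota 0 n.+1).

Definition inv s : nat :=
  count (fun ij : nat * nat => (ij.1 < ij.2)%N && (sv s ij.2 < sv s ij.1)%N)
        [seq (i, j) | i <- iota 1 n, j <- iota 1 n].

Definition is_rlmin s (i : nat) : bool :=
  all (fun j => (sv s i < sv s j)%N) (iota i.+1 (n - i)).

Definition RLmin s : nat := count (is_rlmin s) (iota 1 n).

(* bars at the start and after each RL-minimum; sigma_i is isolated iff
   a bar is right before it and right after it *)
Definition is_isolated s (i : nat) : bool :=
  ((i == 1%N) || is_rlmin s i.-1) && is_rlmin s i.

Definition isol s : nat := count (is_isolated s) (iota 1 n).

Definition iasc s : nat :=
  count (fun i => is_ascent s i && ~~ is_isolated s i.+1) (iota 0 n).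
End Stats.

Local Open Scope ring_scope.
Definition Finv (K : comNzRingType) (beta : K) (n : nat) : {mpoly {poly K}[4]} :=
  \sum_(s : 'S_n)
     ((beta ^+ RLmin s)%:P * 'X^(inv s)) *:
       ('X_(midx MX) ^+ iasc s * 'X_(midx MZ) ^+ isol s
        * 'X_(midx MY) ^+ (des s).-1).

(* A permutation l = σ_1 ... σ_n (with σ_0 = σ_{n+1} = 0) is encoded by the word e_0 w_1 ... w_n
   whose letter of index i is y_i, z_i or x_i according as the gap n - i of l, between σ_{n-i}
   and σ_{n-i+1}, is a descent, is followed by an isolated entry, or neither.  Applied to e_0,
   the rule appends the new maximum n+1 to l: one more right-to-left minimum, which is isolated
   (factor beta, letters e_0 z_1).  Applied to the letter of index p >= 1, it inserts n+1 with
   p entries to its right: p more inversions (factor q^p), and the gap splits into an ascent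
   followed by a descent (letters y_p x_{p+1}), all other gaps keeping their letters up to the
   shift of indices.  As every permutation arises exactly once by inserting its maximum,
   D^n(e_0) is the sum over l in S_n of q^inv beta^RLmin times the word of l, and phi counts
   its letters: the gap n, always a descent, carries no letter, whence the exponent des - 1. *)

From HB Require Import structures.
From Pilot Require Import Defs.
From mathcomp Require Import all_boot all_order all_algebra all_fingroup.
From mathcomp Require Import mpoly.
From mathcomp Require Import zify ring.
Set Implicit Arguments. Unset Strict Implicit. Unset Printing Implicit Defensive.

Definition master_code (m : master) : nat :=
  match m with MX => 0 | MY => 1 | MZ => 2 | ME => 3 end.
Definition code_master (c : nat) : master :=
  match c with 0 => MX | 1 => MY | 2 => MZ | _ => ME end.
Lemma master_codeK : cancel master_code code_master. Proof. by case. Qed.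
HB.instance Definition _ := Equality.copy master (can_type master_codeK).

(* [sv] on the one-line notation [l]; the padding σ_{n+1} = 0 comes from the default of [nth]. *)
Definition entry (l : seq nat) (i : nat) : nat := nth 0 (0 :: l) i.

Definition descent_at (l : seq nat) (i : nat) : bool := entry l i.+1 < entry l i.

Definition rlmin_at (l : seq nat) (i : nat) : bool :=
  all (fun j => entry l i < entry l j) (iota i.+1 (size l - i)).

Definition isolated_at (l : seq nat) (i : nat) : bool :=
  ((i == 1) || rlmin_at l i.-1) && rlmin_at l i.

Definition gap_letter (l : seq nat) (j : nat) : master :=
  if descent_at l j then MY else if isolated_at l j.+1 then MZ else MX.

Definition word_letter (l : seq nat) (i : nat) : letter :=
  if i is 0 then (ME, 0) else (gap_letter l (size l - i), i).

Definition word_of (l : seq nat) : word := map (word_letter l) (iota 0 (size l).+1).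

Definition insert_max (l : seq nat) (p : nat) : seq nat :=
  take (size l - p) l ++ (size l).+1 :: drop (size l - p) l.

Lemma rlmin_atE l i : rlmin_at l i = all (fun v => entry l i < v) (drop i l).
Proof.
rewrite /rlmin_at -[i.+1]/(1 + i) iotaDl all_map.
rewrite -[drop i l](take_oversize (leqnn _)) size_drop -(map_nth_iota 0) //.
by rewrite all_map.
Qed.

Lemma perm_iota_size l n : perm_eq l (iota 1 n) -> size l = n.
Proof. by move/perm_size; rewrite size_iota. Qed.

Lemma perm_iota_mem l n v : perm_eq l (iota 1 n) -> v \in l -> 0 < v <= n.
Proof. by move/perm_mem => -> ; rewrite mem_iota; lia. Qed.

Section Insertion.
Variables (n : nat) (l : seq nat) (p : nat).
Hypothesis l_perm : perm_eq l (iota 1 n).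
Let k := n - p.
Let l' := insert_max l p.
Let size_l : size l = n := perm_iota_size l_perm.

Lemma entry_le i : entry l i <= n.
Proof.
case: i => [|i] //; rewrite /entry /=.
case: (ltnP i (size l)) => [hi|hi]; last by rewrite nth_default.
by case/andP: (perm_iota_mem l_perm (mem_nth 0 hi)).
Qed.

Lemma entry_gt0 i : 0 < i <= n -> 0 < entry l i.
Proof.
case: i => // i /andP[_ hi]; rewrite -size_l in hi; rewrite /entry /=.
by case/andP: (perm_iota_mem l_perm (mem_nth 0 hi)).
Qed.

Lemma size_take_gap : size (take k l) = k.
Proof. by rewrite size_take size_l; case: ltnP => //; rewrite /k; lia. Qed.

Lemma insert_maxE : l' = take k l ++ n.+1 :: drop k l.
Proof. by rewrite /l' /insert_max size_l. Qed.

Lemma size_insert_max : size l' = n.+1.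
Proof. by rewrite insert_maxE size_cat /= size_take_gap size_drop size_l /k; lia. Qed.

Lemma entry_insert_lo i : i <= k -> entry l' i = entry l i.
Proof.
by case: i => // i hi; rewrite insert_maxE /entry /= nth_cat size_take_gap hi nth_take.
Qed.

Lemma entry_insert_max : entry l' k.+1 = n.+1.
Proof. by rewrite insert_maxE /entry /= nth_cat size_take_gap ltnn subnn. Qed.

Lemma entry_insert_hi i : k.+1 < i -> entry l' i = entry l i.-1.
Proof.
case: i => [|[|i]] // hi; rewrite insert_maxE /entry /= nth_cat size_take_gap.
rewrite ltnNge ltnW //= subSn /= ?nth_drop; last lia.
by congr nth; lia.
Qed.

Lemma rlmin_insert_lo i : i <= k -> rlmin_at l' i = rlmin_at l i.
Proof.
move=> hi; rewrite !rlmin_atE entry_insert_lo // insert_maxE drop_cat size_take_gap.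
case: ltnP => hik.
  have -> : drop i l = drop i (take k l) ++ drop k l.
    by rewrite -{1}(cat_take_drop k l) drop_cat size_take_gap hik.
  by rewrite !all_cat /= (leq_ltn_trans (entry_le i)).
have -> : i = k by apply/eqP; rewrite eqn_leq hi hik.
by rewrite subnn /= (leq_ltn_trans (entry_le k)).
Qed.

Lemma rlmin_insert_hi i : k.+1 < i -> rlmin_at l' i = rlmin_at l i.-1.
Proof.
move=> hi; rewrite !rlmin_atE entry_insert_hi // insert_maxE drop_cat size_take_gap.
rewrite ltnNge (ltnW (ltnW hi)) /= (_ : i - k = (i - k).-1.+1) /=; last lia.
by rewrite drop_drop; congr (all _ (drop _ _)); lia.
Qed.

Lemma rlmin_insert_max : k < n -> rlmin_at l' k.+1 = false.
Proof.
move=> hk; rewrite rlmin_atE entry_insert_max insert_maxE drop_cat size_take_gap.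
rewrite ltnNge leqnSn subSn // subnn /= drop0 (drop_nth 0) ?size_l //=.
by rewrite ltnNge (leq_trans (entry_le k.+1)).
Qed.

Lemma gap_letter_insert_lo j : j < k -> gap_letter l' j = gap_letter l j.
Proof.
move=> hj; rewrite /gap_letter /descent_at /isolated_at !entry_insert_lo //; try lia.
by rewrite !rlmin_insert_lo //; lia.
Qed.

Lemma gap_letter_insert_hi j : k.+2 <= j -> gap_letter l' j = gap_letter l j.-1.
Proof.
move=> hj; rewrite /gap_letter /descent_at /isolated_at !entry_insert_hi //; try lia.
rewrite !rlmin_insert_hi //; try lia.
by rewrite prednK //; case: j hj => [|[|j]].
Qed.

Lemma gap_letter_insert_last : p = 0 -> gap_letter l' n = MZ.
Proof.
move=> p0; have kn : k = n by rewrite /k p0 subn0.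
rewrite /gap_letter /descent_at /isolated_at -{1 3}kn entry_insert_max.
rewrite entry_insert_lo ?kn //.
rewrite ltnNge (leq_trans (entry_le n)) //= rlmin_insert_lo ?kn //.
by rewrite !rlmin_atE !drop_oversize ?size_insert_max ?size_l // orbT.
Qed.

Lemma gap_letter_insert_after : k < n -> gap_letter l' k.+1 = MY.
Proof.
move=> hk; rewrite /gap_letter /descent_at entry_insert_max entry_insert_hi //=.
by rewrite ltnS entry_le.
Qed.

Lemma gap_letter_insert_before : k < n -> gap_letter l' k = MX.
Proof.
move=> hk; rewrite /gap_letter /descent_at entry_insert_max entry_insert_lo //.
by rewrite ltnNge (leq_trans (entry_le k)) // /isolated_at rlmin_insert_max // andbF.
Qed.
End Insertion.

Lemma word_of_insert_last n l : perm_eq l (iota 1 n) ->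
  [:: (ME, 0), (MZ, 1) & up (drop 1 (word_of l))] = word_of (insert_max l 0).
Proof.
move=> l_perm; have size_l := perm_iota_size l_perm.
rewrite /word_of (size_insert_max _ l_perm) size_l /= drop0.
congr [:: _, _ & _].
  rewrite /word_letter (size_insert_max _ l_perm) subSS subn0.
  by rewrite (gap_letter_insert_last l_perm).
rewrite /up -map_comp (iotaDl 1 1) -map_comp.
apply/eq_in_map => i; rewrite mem_iota => /andP[i1 i2].
rewrite /= /word_letter (size_insert_max _ l_perm) size_l add1n.
case: i i1 i2 => // i _ i2 /=.
by rewrite (gap_letter_insert_lo l_perm) // subn0; lia.
Qed.

Lemma word_of_insert n l p : perm_eq l (iota 1 n) -> 0 < p <= n ->
  take p (word_of l) ++ [:: (MY, p), (MX, p.+1) & up (drop p.+1 (word_of l))]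
  = word_of (insert_max l p).
Proof.
move=> l_perm /andP[p_gt0 p_le]; have size_l := perm_iota_size l_perm.
rewrite /word_of (size_insert_max _ l_perm) size_l.
have -> : iota 0 n.+2 = iota 0 p ++ [:: p, p.+1 & iota p.+2 (n - p)].
  rewrite -{1}(subnKC (leqW (leqW p_le))) iotaD add0n.
  by rewrite (_ : n.+2 - p = (n - p).+2) //; lia.
rewrite map_cat -map_take take_iota (_ : minn p n.+1 = p); last lia.
congr (_ ++ _).
  apply/eq_in_map => i; rewrite mem_iota => /andP[_ hi].
  rewrite /word_letter (size_insert_max _ l_perm) size_l; case: i hi => // i hi.
  by rewrite (gap_letter_insert_hi l_perm) subSS ?subnS //; lia.
rewrite /= {1 2}/word_letter (size_insert_max _ l_perm) subSS subSn //.
rewrite (gap_letter_insert_after l_perm) ?(gap_letter_insert_before l_perm); try lia.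
case: p p_gt0 p_le => // p _ p_le; congr [:: _, _ & _].
rewrite /up -map_drop drop_iota -map_comp (iotaDl 1 p.+2) -map_comp.
apply/eq_in_map => i; rewrite mem_iota => /andP[i1 i2].
rewrite /= /word_letter (size_insert_max _ l_perm) size_l; case: i i1 i2 => // i i1 i2.
by rewrite add1n (gap_letter_insert_lo l_perm) //; lia.
Qed.

Fixpoint inv_seq (l : seq nat) : nat :=
  if l is a :: t then count (fun v => v < a) t + inv_seq t else 0.

Fixpoint rlmins_seq (l : seq nat) : nat :=
  if l is a :: t then all (fun v => a < v) t + rlmins_seq t else 0.

Lemma inv_seq_insert_max M l k : all (fun v => v < M) l -> k <= size l ->
  inv_seq (take k l ++ M :: drop k l) = inv_seq l + (size l - k).
Proof.
elim: l k => [|a t IH] [|k] //= /andP[aM tM] k_le.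
  have -> : count (fun v => v < M) t = size t by apply/eqP; rewrite -all_count.
  by rewrite aM subn0; lia.
rewrite IH // count_cat /= ltnNge (ltnW aM) -count_cat cat_take_drop; lia.
Qed.

Lemma rlmins_seq_insert_max M l k : all (fun v => v < M) l -> k <= size l ->
  rlmins_seq (take k l ++ M :: drop k l) = rlmins_seq l + (k == size l).
Proof.
elim: l k => [|a t IH] [|k] //= /andP[aM tM] k_le.
  by rewrite ltnNge (ltnW aM) addn0.
by rewrite IH // all_cat /= aM -all_cat cat_take_drop eqSS addnA.
Qed.

Lemma map_entry_iota l : map (entry l) (iota 1 (size l)) = l.
Proof.
by rewrite (iotaDl 1 0) -map_comp -[RHS](take_size l) -(map_nth_iota0 0).
Qed.

Lemma rlmins_seq_count l : rlmins_seq l = count (rlmin_at l) (iota 1 (size l)).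
Proof.
elim: l => [|a t IH] //=; rewrite IH (iotaDl 1 1) count_map.
congr (_ + _); first by rewrite rlmin_atE /= drop0.
apply: eq_in_count => i; rewrite mem_iota => /andP[i_gt0 _].
by rewrite /= !rlmin_atE add1n; case: i i_gt0.
Qed.

Lemma count_allpairs (T S : Type) (P : pred (T * S)) s t :
  count P [seq (i, j) | i <- s, j <- t] =
  sumn [seq count (fun j => P (i, j)) t | i <- s].
Proof. by elim: s => //= x s IH; rewrite count_cat IH count_map. Qed.

Definition inverted_at (l : seq nat) (ij : nat * nat) : bool :=
  (ij.1 < ij.2) && (entry l ij.2 < entry l ij.1).

Lemma inv_seq_count l :
  inv_seq l =
  count (inverted_at l) [seq (i, j) | i <- iota 1 (size l), j <- iota 1 (size l)].
Proof.
rewrite count_allpairs; elim: l => [|a t IH] //=.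
rewrite (iotaDl 1 1) -map_comp /= IH; congr (_ + _).
  rewrite /inverted_at count_map -[in LHS](map_entry_iota t) count_map.
  apply: eq_in_count => j; rewrite mem_iota => /andP[j_gt0 _].
  by rewrite /= add1n; case: j j_gt0.
congr sumn; apply/eq_in_map => i; rewrite mem_iota => /andP[i_gt0 _].
rewrite /= /inverted_at /= add1n count_map; apply: eq_in_count => j.
by rewrite mem_iota => /andP[j_gt0 _]; rewrite /= add1n ltnS; case: i i_gt0; case: j j_gt0.
Qed.

Fixpoint insertion_perms (n : nat) : seq (seq nat) :=
  if n is m.+1 then [seq insert_max l p | l <- insertion_perms m, p <- iota 0 m.+1]
  else [:: [::]].

Lemma insertion_permsS n :
  insertion_perms n.+1 = [seq insert_max l p | l <- insertion_perms n, p <- iota 0 n.+1].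
Proof. by []. Qed.

Lemma perm_insert_max l p : perm_eq (insert_max l p) ((size l).+1 :: l).
Proof. by rewrite /insert_max -cat1s perm_catCA /= perm_cons cat_take_drop. Qed.

Lemma perm_iotaS n : perm_eq (iota 1 n.+1) (n.+1 :: iota 1 n).
Proof. by rewrite -[n.+1]addn1 iotaD perm_catC /= add1n addn1. Qed.

Lemma mem_insertion_perms n l : (l \in insertion_perms n) = perm_eq l (iota 1 n).
Proof.
elim: n l => [|n IH] l; first by rewrite inE; apply/eqP/idP => [->|/perm_size/size0nil].
rewrite insertion_permsS; apply/allpairsP/idP => [[[l0 p] /= [l0_in p_in ->]]|l_perm].
  rewrite IH in l0_in; rewrite (permPr (perm_iotaS n)).
  by rewrite (permPl (perm_insert_max l0 p)) (perm_iota_size l0_in) perm_cons.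
have max_in : n.+1 \in l by rewrite (perm_mem l_perm) mem_iota; lia.
have size_l : size l = n.+1 := perm_iota_size l_perm.
set k := index n.+1 l; have k_lt : k < n.+1 by rewrite -size_l index_mem.
have l_split : l = take k l ++ n.+1 :: drop k.+1 l.
  by rewrite -[in RHS](nth_index 0 max_in) -drop_nth ?cat_take_drop // size_l.
set l0 := take k l ++ drop k.+1 l.
have size_take_k : size (take k l) = k by rewrite size_take size_l k_lt.
exists (l0, n - k) => /=; split.
- rewrite IH -(perm_cons n.+1) -(permPr (perm_iotaS n)) -(permPr l_perm).
  by rewrite perm_sym {1}l_split /l0 -cat1s perm_catCA.
- by rewrite -[0 :: _]/(iota 0 n.+1) mem_iota; lia.
- have size_l0 : size l0 = n by rewrite size_cat size_take_k size_drop size_l; lia.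
  rewrite /insert_max size_l0 (_ : n - (n - k) = k); last lia.
  by rewrite /l0 take_size_cat // drop_size_cat // -l_split.
Qed.

Lemma size_insertion_perms n : size (insertion_perms n) = n`!.
Proof.
by elim: n => // n IH; rewrite insertion_permsS size_allpairs IH size_iota factS mulnC.
Qed.

Definition oneline n (s : 'S_n) : seq nat := [seq (s i).+1 | i <- enum 'I_n].

Lemma size_oneline n (s : 'S_n) : size (oneline s) = n.
Proof. by rewrite size_map size_enum_ord. Qed.

Lemma oneline_inj n : injective (@oneline n).
Proof.
move=> s t /eq_in_map st; apply/permP => i; apply/val_inj/succn_inj.
exact: st (mem_enum _ i).
Qed.

Lemma oneline_perm n (s : 'S_n) : perm_eq (oneline s) (iota 1 n).
Proof.
apply: uniq_perm (iota_uniq 1 n) _.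
  by rewrite map_inj_uniq ?enum_uniq // => i j [] /val_inj/perm_inj.
move=> v; rewrite mem_iota; apply/mapP/idP => [[i _ ->]|v_in].
  by rewrite /= ltnS ltn_ord.
have v_lt : v.-1 < n by lia.
by exists ((s^-1)%g (Ordinal v_lt)); rewrite ?mem_enum // permKV /=; lia.
Qed.

Lemma perm_oneline_insertion_perms n :
  perm_eq (map (@oneline n) (enum 'S_n)) (insertion_perms n).
Proof.
have uniq_oneline : uniq (map (@oneline n) (enum 'S_n)).
  by rewrite map_inj_uniq ?enum_uniq //; exact: oneline_inj.
have onelines_sub : {subset map (@oneline n) (enum 'S_n) <= insertion_perms n}.
  by move=> l /mapP[s _ ->]; rewrite mem_insertion_perms oneline_perm.
have size_le : size (insertion_perms n) <= size (map (@oneline n) (enum 'S_n)).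
  by rewrite size_map -cardE card_Sn size_insertion_perms.
have [eq_size eq_mem] := uniq_min_size uniq_oneline onelines_sub size_le.
by apply: uniq_perm => //; rewrite (uniq_size_uniq uniq_oneline eq_mem) eq_size.
Qed.

Lemma big_oneline (V : nmodType) n (G : seq nat -> V) :
  (\sum_(s : 'S_n) G (oneline s) = \sum_(l <- insertion_perms n) G l)%R.
Proof. by rewrite -(perm_big _ (perm_oneline_insertion_perms n)) big_map big_enum. Qed.

Section OnelineStatistics.
Variables (n : nat) (s : 'S_n).

Lemma rlmin_oneline i : is_rlmin s i = rlmin_at (oneline s) i.
Proof. by rewrite /is_rlmin /rlmin_at size_oneline. Qed.

Lemma isolated_oneline i : is_isolated s i = isolated_at (oneline s) i.
Proof. by rewrite /is_isolated /isolated_at !rlmin_oneline. Qed.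

Lemma inv_oneline : Defs.inv s = inv_seq (oneline s).
Proof. by rewrite inv_seq_count size_oneline. Qed.

Lemma RLmin_oneline : RLmin s = rlmins_seq (oneline s).
Proof.
by rewrite rlmins_seq_count size_oneline; apply: eq_count => i; rewrite rlmin_oneline.
Qed.

Lemma isol_oneline : isol s = count (isolated_at (oneline s)) (iota 1 n).
Proof. by apply: eq_count => i; rewrite isolated_oneline. Qed.

Lemma iasc_oneline :
  iasc s = count (fun i => ~~ descent_at (oneline s) i && ~~ isolated_at (oneline s) i.+1)
                 (iota 0 n).
Proof. by apply: eq_count => i; rewrite /is_ascent isolated_oneline. Qed.

Lemma des_oneline : 0 < n -> des s = (count (descent_at (oneline s)) (iota 0 n)).+1.
Proof.
move=> n_gt0; have last_descent : is_descent s n.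
  rewrite /is_descent (_ : sv s =1 entry (oneline s)) //.
  rewrite {1}/entry /= nth_default ?size_oneline //.
  by rewrite (entry_gt0 (oneline_perm s)) // n_gt0 /=.
by rewrite /des -[n.+1]addn1 iotaD count_cat /= add0n last_descent addn0 addn1.
Qed.
End OnelineStatistics.

Lemma isolated_ascent l j : j < size l -> isolated_at l j.+1 -> ~~ descent_at l j.
Proof.
move=> j_lt /andP[j_rlmin _]; rewrite /descent_at -leqNgt.
case: j j_lt j_rlmin => [|j] // j_lt /allP/(_ j.+2); rewrite mem_iota => entry_lt.
by apply/ltnW/entry_lt; lia.
Qed.

Lemma perm_map_subn_iota n : perm_eq [seq n - i | i <- iota 1 n] (iota 0 n).
Proof.
apply: uniq_perm (iota_uniq 0 n) _.
  by rewrite map_inj_in_uniq ?iota_uniq // => i j; rewrite !mem_iota; lia.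
move=> x; rewrite mem_iota; apply/mapP/idP => [[i]|x_lt]; first by rewrite mem_iota; lia.
by exists (n - x); rewrite ?mem_iota; lia.
Qed.

Section GapLetterCounts.
Variable l : seq nat.
Let gaps := map (gap_letter l) (iota 0 (size l)).

Lemma count_gap_letter_MX :
  count_mem MX gaps =
  count (fun j => ~~ descent_at l j && ~~ isolated_at l j.+1) (iota 0 (size l)).
Proof.
rewrite count_map; apply: eq_count => j.
by rewrite /= /gap_letter; case: descent_at; case: isolated_at.
Qed.

Lemma count_gap_letter_MY : count_mem MY gaps = count (descent_at l) (iota 0 (size l)).
Proof.
rewrite count_map; apply: eq_count => j.
by rewrite /= /gap_letter; case: descent_at; case: isolated_at.
Qed.

Lemma count_gap_letter_MZ : count_mem MZ gaps = count (isolated_at l) (iota 1 (size l)).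
Proof.
rewrite count_map (iotaDl 1 0) count_map; apply: eq_in_count => j.
rewrite mem_iota add0n /= /gap_letter add1n => j_lt.
case: ifPn => [j_desc|_]; last by case: isolated_at.
by apply/esym/negbTE; apply: contraL j_desc; apply: isolated_ascent.
Qed.

Lemma count_gap_letter_ME : count_mem ME gaps = 0.
Proof.
by apply/count_memPn/mapP => -[j _]; rewrite /gap_letter; case: ifP => //; case: ifP.
Qed.
End GapLetterCounts.

Import GRing.Theory.
Local Open Scope ring_scope.

Section Evaluation.
Variable K : comNzRingType.
Local Notation V := {mpoly {poly K}[4]}.

Definition word_monomial (w : word) : V := \prod_(x <- w) 'X_(midx x.1).

Lemma phiE (E : elem K) : phi E = \sum_(a <- E) a.1 *: word_monomial a.2.
Proof. by []. Qed.

Lemma prod_midx (s : seq master) :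
  \prod_(m <- s) ('X_(midx m) : V) =
  'X_(midx MX) ^+ count_mem MX s * 'X_(midx MZ) ^+ count_mem MZ s *
  'X_(midx MY) ^+ count_mem MY s * 'X_(midx ME) ^+ count_mem ME s.
Proof.
elim: s => [|m s IH]; first by rewrite big_nil !expr0 !mulr1.
by rewrite big_cons IH; case: m => /=; rewrite ?add1n ?add0n !exprS; ring.
Qed.

Lemma word_monomial_word_of l :
  word_monomial (word_of l) =
  'X_(midx ME) * \prod_(m <- map (gap_letter l) (iota 0 (size l))) 'X_(midx m).
Proof.
rewrite /word_monomial /word_of big_map [iota 0 _]/= big_cons /= big_map.
rewrite -(perm_big _ (perm_map_subn_iota (size l))) big_map !big_seq.
by congr (_ * _); apply: eq_bigr => -[|i]; rewrite mem_iota.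
Qed.

Lemma word_monomial_oneline n (s : 'S_n) : (0 < n)%N ->
  word_monomial (word_of (oneline s)) =
  'X_(midx ME) * ('X_(midx MX) ^+ iasc s * 'X_(midx MZ) ^+ isol s *
                  'X_(midx MY) ^+ (des s).-1).
Proof.
move=> n_gt0; rewrite word_monomial_word_of prod_midx count_gap_letter_ME.
rewrite count_gap_letter_MX count_gap_letter_MY count_gap_letter_MZ size_oneline.
by rewrite expr0 mulr1 iasc_oneline isol_oneline des_oneline.
Qed.
End Evaluation.

Section Derivative.
Variables (K : comNzRingType) (beta : K).

(* The coefficient the rule produces at the letter of index [p] of [word_of l]. *)
Definition rule_coef (p : nat) : {poly K} := if p is 0 then beta%:P else 'X^p.

Definition weight (l : seq nat) : {poly K} := (beta ^+ rlmins_seq l)%:P * 'X^(inv_seq l).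

Lemma weight_insert_max n l p : perm_eq l (iota 1 n) -> (p <= n)%N ->
  weight (insert_max l p) = weight l * rule_coef p.
Proof.
move=> l_perm p_le; have size_l := perm_iota_size l_perm.
have l_lt : all (fun v => v < n.+1)%N l.
  by apply/allP => v /(perm_iota_mem l_perm); case/andP.
have gap_le : (n - p <= size l)%N by rewrite size_l leq_subr.
rewrite /weight /insert_max size_l inv_seq_insert_max ?rlmins_seq_insert_max // size_l.
rewrite (_ : (n - (n - p) = p)%N); last lia.
case: p p_le gap_le => [|p] p_le _ /=.
  by rewrite subn0 eqxx addn0 addn1 exprS polyCM; ring.
by rewrite (_ : (n - p.+1 == n)%N = false) ?addn0 ?exprD ?mulrA //; lia.
Qed.

Variable V : lmodType {poly K}.

Lemma sum_Dcyc (E : elem K) (F : word -> V) :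
  \sum_(a <- Dcyc beta E) a.1 *: F a.2 =
  \sum_(a <- E) a.1 *: \sum_(c <- Dword beta a.2) c.1 *: F c.2.
Proof.
rewrite big_flatten big_map; apply: eq_bigr => a _.
by rewrite big_map scaler_sumr; apply: eq_bigr => c _; rewrite scalerA.
Qed.

Lemma sum_Dword_word_of n l (F : word -> V) : perm_eq l (iota 1 n) ->
  \sum_(c <- Dword beta (word_of l)) c.1 *: F c.2 =
  \sum_(p <- iota 0 n.+1) rule_coef p *: F (word_of (insert_max l p)).
Proof.
move=> l_perm; have size_l := perm_iota_size l_perm.
have size_word : size (word_of l) = n.+1 by rewrite size_map size_iota size_l.
rewrite /Dword big_flatten big_map size_word !big_seq; apply: eq_bigr => j.
rewrite mem_iota add0n => /andP[_ j_lt]; rewrite big_map.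
rewrite (_ : nth _ _ j = word_letter l j); last first.
  by rewrite (nth_map 0%N) ?size_iota ?nth_iota // size_l.
case: j j_lt => [|p] p_lt.
  by rewrite big_seq1 /= mulr1 -(word_of_insert_last l_perm).
rewrite /word_letter size_l.
have -> : rule_cyc beta (gap_letter l (n - p.+1), p.+1) =
          [:: ('X^(p.+1), [:: (MY, p.+1); (MX, p.+2)])].
  by rewrite /rule_cyc /gap_letter; case: ifP => //; case: ifP.
by rewrite big_seq1 /= -(word_of_insert l_perm) //; lia.
Qed.

Lemma sum_Dcyc_iter n (F : word -> V) :
  \sum_(a <- Dcyc_iter beta n (e0 K)) a.1 *: F a.2 =
  \sum_(l <- insertion_perms n) weight l *: F (word_of l).
Proof.
elim: n F => [|n IH] F; first by rewrite !big_seq1 /weight /= expr0 mulr1.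
rewrite [Dcyc_iter _ _ _]/= sum_Dcyc (IH (fun w => \sum_(c <- Dword beta w) c.1 *: F c.2)).
rewrite insertion_permsS big_allpairs_dep !big_seq; apply: eq_bigr => l.
rewrite mem_insertion_perms => l_perm; rewrite (sum_Dword_word_of _ l_perm).
rewrite scaler_sumr !big_seq; apply: eq_bigr => p; rewrite mem_iota => /andP[_ p_lt].
by rewrite scalerA (weight_insert_max l_perm) //; lia.
Qed.

Lemma weight_oneline n (s : 'S_n) :
  weight (oneline s) = (beta ^+ RLmin s)%:P * 'X^(Defs.inv s).
Proof. by rewrite /weight RLmin_oneline inv_oneline. Qed.
End Derivative.

Theorem theorem5p8 (K : comNzRingType) (char0 : [pchar K] =i pred0)
    (beta : K) (n : nat) :
  (0 < n)%N ->
  phi (Dcyc_iter beta n (e0 K)) = 'X_(midx ME) * Finv beta n.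
Proof.
move=> n_gt0; rewrite phiE sum_Dcyc_iter.
rewrite -(big_oneline n (fun l => weight beta l *: word_monomial K (word_of l))).
rewrite /Finv mulr_sumr; apply: eq_bigr => s _.
by rewrite weight_oneline word_monomial_oneline // scalerAr.
Qed.
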